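(* For any time warp $f$ and $n\in\omega\setminus\{0\}$: $f^{o}(n)=0\iff f(n)<\omega$; $f^{o}(n)=\omega\iff f(n)=\omega$; $f^{o}(\omega)=0\iff f(k)<\omega$ for all $k\in\omega$; $f^{o}(\omega)=\omega\iff f(k)=\omega$ for some $k\in\omega$.
   Context: Let $\overline{\omega}=\omega\cup\{\omega\}$ be the natural numbers with a top element $\omega$ adjoined, with its natural total order. A time warp is a monotone map $f\colon\overline{\omega}\to\overline{\omega}$ with $f(0)=0$ and $f(\omega)=\bigvee\{f(n)\mid n\in\omega\}$. The set $W$ of time warps is ordered pointwise and $fg:=f\circ g$; $\top$ maps every $p\ne0$ to $\omega$ and $0$ to $0$. The left residual $\backslash$ is the binary operation on $W$ with $g\le f\backslash h\iff fg\le h$ for all $f,g,h\in W$. Define $f^{o}:=\top\backslash f$. *)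

From Stdlib Require Import Arith Lia.

Inductive wbar : Type := Fin (n : nat) | Omega.

Definition wle (x y : wbar) : Prop :=
  match x, y with
  | Fin m, Fin n => m <= n
  | _, Omega => True
  | Omega, Fin _ => False
  end.

Definition wlt (x y : wbar) : Prop := wle x y /\ x <> y.

Definition is_sup (s : nat -> wbar) (x : wbar) : Prop :=
  (forall n, wle (s n) x) /\ (forall y, (forall n, wle (s n) y) -> wle x y).

Definition is_timewarp (f : wbar -> wbar) : Prop :=
  (forall x y, wle x y -> wle (f x) (f y)) /\
  f (Fin 0) = Fin 0 /\
  is_sup (fun n => f (Fin n)) (f Omega).

Definition W := { f : wbar -> wbar | is_timewarp f }.

Definition app (f : W) : wbar -> wbar := proj1_sig f.
Coercion app : W >-> Funclass.

Definition Wle (f g : W) : Prop := forall p, wle (f p) (g p).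

Definition top_fun (p : wbar) : wbar :=
  match p with Fin 0 => Fin 0 | _ => Omega end.

Lemma top_timewarp : is_timewarp top_fun.
Proof.
  split; [|split].
  - intros [[|m]|] [[|n]|]; simpl; auto; lia.
  - reflexivity.
  - split.
    + intros [|n]; simpl; auto.
    + intros [y|] H; simpl; auto. specialize (H 1); simpl in H; exact H.
Qed.

Definition Wtop : W := exist _ top_fun top_timewarp.

(* left residual: a binary operation res on W with
   g <= res f h  <->  f o g <= h  (pointwise), for all f g h in W.
   Such an operation is unique (Galois adjunction). *)
Definition is_left_residual (res : W -> W -> W) : Prop :=
  forall f g h : W, Wle g (res f h) <-> (forall p, wle (f (g p)) (h p)).

(* Since [Wtop] only takes the values 0 and omega, [Wtop o g <= f] says exactly
   that [g p = 0] wherever [f p] is finite.  The residual [Wtop \ f] is the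
   largest such time warp: it vanishes where [f] is finite, and at any
   [n >= 1] with [f n = omega] it is bounded below by the step warp jumping
   from 0 to omega at [n].  Its value at omega is then the supremum of a
   family of 0s and omegas. *)

From Stdlib Require Import Arith Lia Classical.

Lemma wbar_eq_dec (x y : wbar) : {x = y} + {x <> y}.
Proof. decide equality; apply Nat.eq_dec. Qed.

Lemma wle_refl (x : wbar) : wle x x.
Proof. now destruct x; simpl. Qed.

Lemma Omega_wle (x : wbar) : wle Omega x -> x = Omega.
Proof. destruct x; simpl; tauto. Qed.

Lemma wle_Fin0 (x : wbar) : wle x (Fin 0) -> x = Fin 0.
Proof. destruct x as [m|]; simpl; [intro; f_equal; lia | tauto]. Qed.

Lemma wlt_Omega (x : wbar) : wlt x Omega <-> x <> Omega.
Proof. unfold wlt; destruct x; simpl; tauto. Qed.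

Lemma is_sup_Fin0 (s : nat -> wbar) (x : wbar) :
  is_sup s x -> (forall n, s n = Fin 0) -> x = Fin 0.
Proof.
  intros [_ lub] s0. apply wle_Fin0, lub. intro n. rewrite s0. apply wle_refl.
Qed.

Section TimeWarp.
Variable f : W.

Lemma W_mono (x y : wbar) : wle x y -> wle (f x) (f y).
Proof. exact (proj1 (proj2_sig f) x y). Qed.

Lemma W_Fin0 : f (Fin 0) = Fin 0.
Proof. exact (proj1 (proj2 (proj2_sig f))). Qed.

Lemma W_sup : is_sup (fun n => f (Fin n)) (f Omega).
Proof. exact (proj2 (proj2 (proj2_sig f))). Qed.

Lemma W_Omega_pos (k : nat) : f (Fin k) = Omega -> k <> 0.
Proof. intros fk ->. rewrite W_Fin0 in fk. discriminate. Qed.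

End TimeWarp.

Definition step_fun (n : nat) (p : wbar) : wbar :=
  match p with
  | Fin m => if n <=? m then Omega else Fin 0
  | Omega => Omega
  end.

Lemma step_timewarp (n : nat) : n <> 0 -> is_timewarp (step_fun n).
Proof.
  intro n_pos. split; [|split].
  - intros [m|] [k|]; simpl; try tauto; intro mk.
    + destruct (Nat.leb_spec n m), (Nat.leb_spec n k); simpl; auto; lia.
    + now destruct (n <=? m).
  - simpl. destruct (Nat.leb_spec n 0); [lia | reflexivity].
  - split.
    + intro k. simpl. now destruct (n <=? k).
    + intros y ub. specialize (ub n). simpl in ub. now rewrite Nat.leb_refl in ub.
Qed.

Definition step (n : nat) (n_pos : n <> 0) : W :=
  exist _ (step_fun n) (step_timewarp n n_pos).

Lemma top_step_le (f : W) (n : nat) (n_pos : n <> 0) :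
  f (Fin n) = Omega -> forall p, wle (Wtop (step n n_pos p)) (f p).
Proof.
  intros fn [m|]; cbn.
  - destruct (Nat.leb_spec n m) as [nm | mn]; cbn.
    + change (wle Omega (f (Fin m))). rewrite <- fn. apply W_mono. exact nm.
    + destruct (f (Fin m)); simpl; auto; lia.
  - change (wle Omega (f Omega)). rewrite <- fn at 1. exact (proj1 (W_sup f) n).
Qed.

Section TopResidual.
Variable res : W -> W -> W.
Hypothesis res_adj : is_left_residual res.

Lemma residual_counit (g f : W) (p : wbar) : wle (g (res g f p)) (f p).
Proof. exact (proj1 (res_adj g (res g f) f) (fun q => wle_refl _) p). Qed.

Variable f : W.

Lemma res_top_nonzero (p : wbar) : res Wtop f p <> Fin 0 -> f p = Omega.
Proof.
  intro nz. apply Omega_wle.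
  pose proof (residual_counit Wtop f p) as counit.
  destruct (res Wtop f p) as [[|k]|]; [congruence | exact counit | exact counit].
Qed.

Lemma res_top_Fin_Omega (n : nat) :
  f (Fin n) = Omega -> res Wtop f (Fin n) = Omega.
Proof.
  intro fn. pose proof (W_Omega_pos f n fn) as n_pos.
  assert (step_le : Wle (step n n_pos) (res Wtop f))
    by exact (proj2 (res_adj _ _ _) (top_step_le f n n_pos fn)).
  specialize (step_le (Fin n)). cbn in step_le.
  rewrite Nat.leb_refl in step_le. now apply Omega_wle.
Qed.

Lemma res_top_Fin_cases (n : nat) :
  res Wtop f (Fin n) = Fin 0 \/ res Wtop f (Fin n) = Omega.
Proof.
  destruct (wbar_eq_dec (res Wtop f (Fin n)) (Fin 0)) as [z | nz]; [now left|].
  right. exact (res_top_Fin_Omega n (res_top_nonzero _ nz)).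
Qed.

Lemma res_top_Fin_eq_Omega (n : nat) :
  res Wtop f (Fin n) = Omega <-> f (Fin n) = Omega.
Proof.
  split; [|exact (res_top_Fin_Omega n)].
  intro fo_n. apply res_top_nonzero. now rewrite fo_n.
Qed.

Lemma res_top_Fin_eq0 (n : nat) :
  res Wtop f (Fin n) = Fin 0 <-> f (Fin n) <> Omega.
Proof.
  rewrite <- res_top_Fin_eq_Omega.
  destruct (res_top_Fin_cases n) as [-> | ->]; split; congruence.
Qed.

Lemma res_top_Omega_eq_Omega_of (k : nat) :
  f (Fin k) = Omega -> res Wtop f Omega = Omega.
Proof.
  intro fk. apply Omega_wle. rewrite <- (res_top_Fin_Omega k fk) at 1.
  apply W_mono. exact I.
Qed.

Lemma res_top_Omega_eq0 :
  res Wtop f Omega = Fin 0 <-> forall k, f (Fin k) <> Omega.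
Proof.
  split.
  - intros fo_Omega k fk. rewrite (res_top_Omega_eq_Omega_of k fk) in fo_Omega.
    discriminate.
  - intro finite. apply (is_sup_Fin0 _ _ (W_sup _)).
    intro k. now apply res_top_Fin_eq0.
Qed.

Lemma res_top_Omega_eq_Omega :
  res Wtop f Omega = Omega <-> exists k, f (Fin k) = Omega.
Proof.
  split.
  - intro fo_Omega. apply NNPP. intro none.
    assert (finite : forall k, f (Fin k) <> Omega)
      by (intros k fk; apply none; now exists k).
    apply res_top_Omega_eq0 in finite. congruence.
  - intros [k fk]. exact (res_top_Omega_eq_Omega_of k fk).
Qed.

End TopResidual.

Theorem lemma2p5 (res : W -> W -> W) (Hres : is_left_residual res) (f : W) :
  let fo := res Wtop f in
  (forall n : nat, n <> 0 ->
     (fo (Fin n) = Fin 0 <-> wlt (f (Fin n)) Omega) /\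
     (fo (Fin n) = Omega <-> f (Fin n) = Omega)) /\
  (fo Omega = Fin 0 <-> (forall k : nat, wlt (f (Fin k)) Omega)) /\
  (fo Omega = Omega <-> (exists k : nat, f (Fin k) = Omega)).
Proof.
  intro fo. split; [|split].
  - intros n _. rewrite wlt_Omega.
    split; [apply res_top_Fin_eq0 | apply res_top_Fin_eq_Omega]; exact Hres.
  - setoid_rewrite wlt_Omega. exact (res_top_Omega_eq0 res Hres f).
  - exact (res_top_Omega_eq_Omega res Hres f).
Qed.
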